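(* Let $(X_1,X_2)$ be jointly distributed random variables with finite alphabets $\mathcal{X}_1,\mathcal{X}_2$, and let $Y=(X_1,X_2)$ with alphabet $\mathcal{Y}=\mathcal{X}_1\times\mathcal{X}_2$. Then $I_\cap^2(\{X_1,X_2\};Y)=C_{GK}(X_1;X_2)\leq I(X_1;X_2)$.
   Context: For finite-valued random variables, $A-B-C$ means that $A$ and $C$ are conditionally independent given $B$. For jointly distributed finite random variables $(X_1,X_2,Y)$ define $$I_\cap^2(\{X_1,X_2\};Y)=\sup_{Q}\, I(Q;Y),$$ where the supremum is over all finite-valued random variables $Q$ jointly distributed with $(X_1,X_2,Y)$ (the marginal of $(X_1,X_2,Y)$ being fixed) such that both $Q-X_1-Y$ and $Q-X_2-Y$ are Markov chains. The Gács–Körner common information is defined as follows: consider the bipartite graph with vertex set $\mathcal{X}_1\cup\mathcal{X}_2$ (disjoint union) and an edge between $x_1$ and $x_2$ iff $p_{X_1X_2}(x_1,x_2)>0$; let $Q_*$ be the random variable equal to the index of the connected component of this graph containing the realized pair $(X_1,X_2)$ (the maximal common random variable of $X_1$ and $X_2$). Then $C_{GK}(X_1;X_2)=H(Q_* )$. $H$ and $I$ denote Shannon entropy and mutual information. *)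

(* Finite random variables are modelled
   as functions on a finite sample space carrying a probability mass function. *)
From HB Require Import structures.
From mathcomp Require Import all_boot all_order all_algebra.
From mathcomp Require Import classical_sets reals exp.
Set Implicit Arguments.
Unset Strict Implicit.
Unset Printing Implicit Defensive.
Import Order.TTheory GRing.Theory Num.Theory.
Local Open Scope ring_scope.

Section InfoDefs.
Variable R : realType.

Definition is_pmf (Om : finType) (P : Om -> R) : Prop :=
  (forall w, 0 <= P w) /\ \sum_(w : Om) P w = 1.

Definition law (Om : finType) (P : Om -> R) (T : eqType) (X : Om -> T) (t : T) : R :=
  \sum_(w : Om | X w == t) P w.

Definition rvpair (Om : finType) (A B : Type) (X : Om -> A) (Y : Om -> B) :=
  fun w => (X w, Y w).

(* Shannon entropy (natural log; convention 0 log 0 = 0) *)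
Definition entropy (Om : finType) (P : Om -> R) (T : finType) (X : Om -> T) : R :=
  - \sum_(t : T | 0 < law P X t) law P X t * ln (law P X t).

Definition minfo (Om : finType) (P : Om -> R) (A B : finType)
  (X : Om -> A) (Y : Om -> B) : R :=
  entropy P X + entropy P Y - entropy P (rvpair X Y).

(* Markov chain A - B - C : A and C conditionally independent given B,
   i.e. p(a,b,c) p(b) = p(a,b) p(b,c) for all a b c. *)
Definition markov (Om : finType) (P : Om -> R) (TA TB TC : eqType)
  (A : Om -> TA) (B : Om -> TB) (C : Om -> TC) : Prop :=
  forall a b c,
    law P (rvpair (rvpair A B) C) ((a, b), c) * law P B b
    = law P (rvpair A B) (a, b) * law P (rvpair B C) (b, c).

(* I_cap^2({X1,X2};Y) = sup over all finite-valued Q jointly distributed with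
   (X1,X2,Y) (realized on some finite probability space with the same law of
   (X1,X2,Y)) such that Q - X1 - Y and Q - X2 - Y, of I(Q;Y). *)
Definition Icap2 (Om : finType) (P : Om -> R) (T1 T2 TY : finType)
  (X1 : Om -> T1) (X2 : Om -> T2) (Y : Om -> TY) : R :=
  sup [set v : R | exists (Om' : finType) (P' : Om' -> R) (TQ : finType)
        (Q : Om' -> TQ) (X1' : Om' -> T1) (X2' : Om' -> T2) (Y' : Om' -> TY),
        [/\ is_pmf P',
            (forall t, law P' (rvpair (rvpair X1' X2') Y') t
                       = law P (rvpair (rvpair X1 X2) Y) t),
            markov P' Q X1' Y',
            markov P' Q X2' Y' &
            v = minfo P' Q Y']].

Definition gk_edge (Om : finType) (P : Om -> R) (T1 T2 : finType)
  (X1 : Om -> T1) (X2 : Om -> T2) : rel (T1 + T2) :=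
  fun u v => match u, v with
             | inl a, inr b => 0 < law P (rvpair X1 X2) (a, b)
             | inr b, inl a => 0 < law P (rvpair X1 X2) (a, b)
             | _, _ => false
             end.

(* maximal common random variable: (a canonical label of) the connected
   component containing the realized pair (X1,X2), i.e. containing X1 *)
Definition gk_common (Om : finType) (P : Om -> R) (T1 T2 : finType)
  (X1 : Om -> T1) (X2 : Om -> T2) : Om -> T1 + T2 :=
  fun w => fingraph.root (gk_edge P X1 X2) (inl (X1 w)).

Definition CGK (Om : finType) (P : Om -> R) (T1 T2 : finType)
  (X1 : Om -> T1) (X2 : Om -> T2) : R :=
  entropy P (gk_common P X1 X2).

End InfoDefs.

From HB Require Import structures.
From mathcomp Require Import all_boot all_order all_algebra ring lra.
From mathcomp Require Import classical_sets reals exp.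
Import Order.TTheory GRing.Theory Num.Theory.
Local Open Scope ring_scope.
Set Implicit Arguments.
Unset Strict Implicit.

(* Every admissible Q satisfies p(q | x1) = p(q | x1, x2) = p(q | x2) whenever
   p(x1, x2) > 0, so the conditional law of Q given a vertex of the Gacs-Korner
   graph is constant on connected components.  Writing C for the component,
   this gives p(q, y) p(c) = p(q, c) p(y) <= p(q) p(y) pointwise, hence
   I(Q; Y) <= H(C).  Conversely C is a function of X1 and of X2, hence
   admissible, and I(C; Y) = H(C) because C is a function of Y.  Finally
   I(X1; X2) - H(C) is the average of ln (p(x1) p(x2) / (p(x1, x2) p(c))),
   which is nonnegative by ln t <= t - 1 since these ratios average to at
   most 1. *)

Lemma sup_max (R : realType) (E : set R) x : E x -> ubound E x -> sup E = x.
Proof.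
move=> Ex ubx; apply/le_anti/andP; split; first by apply: ge_sup => //; exists x.
by apply: ub_le_sup => //; exists x.
Qed.

Lemma ln_le_subr1 (R : realType) (t : R) : 0 < t -> ln t <= t - 1.
Proof. by move=> t0; rewrite -{1}(subrKC 1 t) le_ln1Dx // ltrBrDl addrN. Qed.

Lemma root_invariant (T : finType) (U : eqType) (e : rel T) (f : T -> U) :
  (forall u v, e u v -> f u = f v) -> forall u, f u = f (fingraph.root e u).
Proof.
move=> ef u; have cl : closed e [pred x | f x == f u].
  by move=> x y exy; rewrite !inE (ef x y exy).
by have := closed_connect cl (connect_root e u); rewrite !inE eqxx => /esym/eqP.
Qed.

Section Law.
Variables (R : realType) (Om : finType) (P : Om -> R).
Hypothesis P_ge0 : forall w, 0 <= P w.

Lemma law_ge0 (T : eqType) (X : Om -> T) t : 0 <= law P X t.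
Proof. exact: sumr_ge0. Qed.

Lemma law_gt0 (T : eqType) (X : Om -> T) w : 0 < P w -> 0 < law P X (X w).
Proof.
move=> Pw; apply: lt_le_trans Pw _.
by rewrite /law (bigD1 w) //= lerDl; apply: sumr_ge0.
Qed.

Lemma sum_law (T : finType) (X : Om -> T) (g : T -> R) :
  \sum_t law P X t * g t = \sum_w P w * g (X w).
Proof.
rewrite (partition_big X xpredT) //=; apply: eq_bigr => t _.
by rewrite /law mulr_suml; apply: eq_bigr => w /eqP ->.
Qed.

Lemma entropyE (T : finType) (X : Om -> T) :
  entropy P X = - \sum_w P w * ln (law P X (X w)).
Proof.
rewrite /entropy -(sum_law X (fun t => ln (law P X t))) big_mkcond /=.
congr (- _); apply: eq_bigr => t _; case: ifP => // /negbT.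
by rewrite lt0r law_ge0 andbT negbK => /eqP ->; rewrite mul0r.
Qed.

Lemma eq_law_ae (T : eqType) (X X' : Om -> T) :
  (forall w, 0 < P w -> X w = X' w) -> law P X =1 law P X'.
Proof.
move=> XX' t; rewrite /law big_mkcond [RHS]big_mkcond /=; apply: eq_bigr => w _.
have [Pw|Pw] := ltP 0 (P w); first by rewrite XX'.
have -> : P w = 0 by apply/eqP; rewrite eq_le Pw P_ge0.
by do 2 case: ifP.
Qed.

Lemma law_injE (T T' : eqType) (X : Om -> T) (k : T -> T') :
  injective k -> forall t, law P (k \o X) (k t) = law P X t.
Proof. by move=> k_inj t; apply: eq_bigl => w /=; rewrite inj_eq. Qed.

Lemma law_compE (T T' : finType) (X : Om -> T) (g : T -> T') t :
  law P (g \o X) t = \sum_(s | g s == t) law P X s.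
Proof.
rewrite /law (partition_big X (fun s => g s == t)) //=.
apply: eq_bigr => s /eqP gs; apply: eq_bigl => w.
by case: (X w =P s) => [->|]; rewrite ?andbF ?gs ?eqxx.
Qed.

Lemma le_law_comp (T T' : finType) (X : Om -> T) (g : T -> T') t :
  law P X t <= law P (g \o X) (g t).
Proof.
rewrite law_compE (bigD1 t) //= lerDl.
by apply: sumr_ge0 => s _; apply: law_ge0.
Qed.

Lemma law_pair_le_fst (A B : finType) (X : Om -> A) (Y : Om -> B) a b :
  law P (rvpair X Y) (a, b) <= law P X a.
Proof. exact: (le_law_comp _ fst). Qed.

Lemma law_pair_le_snd (A B : finType) (X : Om -> A) (Y : Om -> B) a b :
  law P (rvpair X Y) (a, b) <= law P Y b.
Proof. exact: (le_law_comp _ snd). Qed.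

Lemma entropy_inj (T T' : finType) (X : Om -> T) (k : T -> T') :
  injective k -> entropy P (k \o X) = entropy P X.
Proof.
move=> k_inj; rewrite !entropyE; congr (- _); apply: eq_bigr => w _.
by rewrite /= law_injE.
Qed.

Lemma markov_ae (TA TB TC : eqType) (A A' : Om -> TA) (B B' : Om -> TB)
    (C C' : Om -> TC) :
  (forall w, 0 < P w -> [/\ A w = A' w, B w = B' w & C w = C' w]) ->
  markov P A B C -> markov P A' B' C'.
Proof.
move=> ABC M a b c; move: (M a b c).
by rewrite (eq_law_ae (X' := rvpair (rvpair A' B') C')) ?(eq_law_ae (X' := B'))
  ?(eq_law_ae (X' := rvpair A' B')) ?(eq_law_ae (X' := rvpair B' C')) //
  => w /ABC[eA eB eC]; rewrite /rvpair ?eA ?eB ?eC.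
Qed.

Lemma law_graph (T TZ : eqType) (Z : Om -> TZ) (k : TZ -> T) a z :
  law P (rvpair (k \o Z) Z) (a, z) = if a == k z then law P Z z else 0.
Proof.
rewrite /law; case: eqP => [->|ne].
  by apply: eq_bigl => w; rewrite xpair_eqE andb_idl // => /eqP /= ->.
rewrite big_pred0 // => w; rewrite xpair_eqE.
by apply/andP => -[/eqP kZ /eqP Zz]; apply: ne; rewrite -kZ /= Zz.
Qed.

Lemma markov_of_fun (TA TB TC : eqType) (B : Om -> TB) (C : Om -> TC)
    (g : TB -> TA) :
  markov P (g \o B) B C.
Proof.
move=> a b c.
have hinj : injective (fun s : TA * (TB * TC) => (s.1, s.2.1, s.2.2)).
  by move=> [? [? ?]] [? [? ?]] [-> -> ->].
have -> : law P (rvpair (rvpair (g \o B) B) C) (a, b, c)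
    = law P (rvpair (g \o fst \o rvpair B C) (rvpair B C)) (a, (b, c))
  := law_injE (rvpair (g \o fst \o rvpair B C) (rvpair B C)) hinj (a, (b, c)).
by rewrite !law_graph /=; case: eqP; rewrite ?mul0r // mulrC.
Qed.

Lemma markov_funE (TQ T TY : eqType) (Q : Om -> TQ) (Y : Om -> TY)
    (k : TY -> T) :
  markov P Q (k \o Y) Y -> forall q y,
  law P (rvpair Q Y) (q, y) * law P (k \o Y) (k y)
  = law P (rvpair Q (k \o Y)) (q, k y) * law P Y y.
Proof.
move=> M q y; have := M q (k y) y.
have hinj : injective (fun s : TQ * TY => (s.1, k s.2, s.2)).
  by move=> [? ?] [? ?] [-> _ ->].
have -> : law P (rvpair (rvpair Q (k \o Y)) Y) (q, k y, y) = law P (rvpair Q Y) (q, y)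
  := law_injE (rvpair Q Y) hinj (q, y).
by rewrite law_graph eqxx.
Qed.

End Law.

Lemma eq_law_comp (R : realType) (Om Om' : finType) (P : Om -> R) (P' : Om' -> R)
    (T T' : finType) (Z : Om -> T) (Z' : Om' -> T) (g : T -> T') :
  law P Z =1 law P' Z' -> law P (g \o Z) =1 law P' (g \o Z').
Proof.
by move=> ZZ' s; rewrite !law_compE; apply: eq_bigr => t _; rewrite ZZ'.
Qed.

Lemma eq_entropy (R : realType) (Om Om' : finType) (P : Om -> R) (P' : Om' -> R)
    (T : finType) (Z : Om -> T) (Z' : Om' -> T) :
  law P Z =1 law P' Z' -> entropy P Z = entropy P' Z'.
Proof.
by move=> ZZ'; rewrite /entropy; congr (- _); apply: eq_big => t; rewrite ZZ'.
Qed.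

Lemma ae_eq_of_law_diag (R : realType) (Om Om' : finType) (P : Om -> R)
    (P' : Om' -> R) (T : finType) (Z : Om -> T) (Z' Y' : Om' -> T) :
  (forall w, 0 <= P' w) -> law P' (rvpair Z' Y') =1 law P (rvpair Z Z) ->
  forall w, 0 < P' w -> Y' w = Z' w.
Proof.
move=> P'_ge0 lawE w Pw; have := law_gt0 P'_ge0 (rvpair Z' Y') Pw.
rewrite lawE; apply: contraTeq => ne; rewrite /law big_pred0 ?ltxx // => u.
by rewrite xpair_eqE; apply/andP => -[/eqP e1 /eqP e2]; move: ne; rewrite -e1 -e2 eqxx.
Qed.

Section GacsKornerGraph.
Variables (R : realType) (Om : finType) (P : Om -> R).
Hypothesis P_ge0 : forall w, 0 <= P w.
Variables (T1 T2 : finType) (X1 : Om -> T1) (X2 : Om -> T2).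
Local Notation e := (gk_edge P X1 X2).
Local Notation C := (gk_common P X1 X2).

Lemma gk_edge_sym : symmetric e.
Proof. by case=> [a|b] [a'|b']. Qed.

Definition gk_rootl (a : T1) := fingraph.root e (inl a).
Definition gk_rootr (b : T2) := fingraph.root e (inr b).

Lemma gk_root_edge a b : 0 < law P (rvpair X1 X2) (a, b) -> gk_rootl a = gk_rootr b.
Proof. by move=> ab; apply/(fingraph.rootP (sym_connect_sym gk_edge_sym))/connect1. Qed.

Lemma gk_common_ae w : 0 < P w -> C w = gk_rootr (X2 w).
Proof. by move=> Pw; apply: gk_root_edge; apply: (law_gt0 P_ge0 (rvpair X1 X2) Pw). Qed.

Lemma markov_gk_commonl (TZ : eqType) (Z : Om -> TZ) : markov P C X1 Z.
Proof. exact: (markov_of_fun P X1 Z gk_rootl). Qed.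

Lemma markov_gk_commonr (TZ : eqType) (Z : Om -> TZ) : markov P C X2 Z.
Proof.
apply: (markov_ae P_ge0 _ (markov_of_fun P X2 Z gk_rootr)).
by move=> w Pw; split => //; rewrite /= gk_common_ae.
Qed.

Lemma minfo_gk_common : minfo P C (rvpair X1 X2) = CGK P X1 X2.
Proof.
rewrite /minfo.
have hinj : injective (fun y : T1 * T2 => (gk_rootl y.1, y)) by move=> ? ? [_ ->].
have -> : entropy P (rvpair C (rvpair X1 X2)) = entropy P (rvpair X1 X2)
  := entropy_inj P_ge0 (rvpair X1 X2) hinj.
by rewrite addrK.
Qed.

End GacsKornerGraph.

Lemma eq_CGK (R : realType) (Om Om' : finType) (P : Om -> R) (P' : Om' -> R)
    (T1 T2 : finType) (X1 : Om -> T1) (X2 : Om -> T2) (X1' : Om' -> T1)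
    (X2' : Om' -> T2) :
  law P' (rvpair X1' X2') =1 law P (rvpair X1 X2) -> CGK P' X1' X2' = CGK P X1 X2.
Proof.
move=> XX'; rewrite /CGK /gk_common.
have -> : gk_edge P' X1' X2' = gk_edge P X1 X2.
  by apply: boolp.funext => -[a|b]; apply: boolp.funext => -[a'|b'] /=; rewrite ?XX'.
apply: eq_entropy => t.
exact: (eq_law_comp (fun s => fingraph.root (gk_edge P X1 X2) (inl s.1)) XX' t).
Qed.

Section UpperBound.
Variables (R : realType) (Om : finType) (P : Om -> R).
Hypothesis P_ge0 : forall w, 0 <= P w.
Variables (T1 T2 TQ : finType) (X1 : Om -> T1) (X2 : Om -> T2) (Q : Om -> TQ).
Local Notation Y := (rvpair X1 X2).
Local Notation e := (gk_edge P X1 X2).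
Local Notation C := (gk_common P X1 X2).
Hypotheses (MQ1 : markov P Q X1 Y) (MQ2 : markov P Q X2 Y).

(* p(Q = q | u), with the junk value 0 at vertices of probability 0. *)
Definition cond_node (q : TQ) (u : T1 + T2) : R :=
  match u with
  | inl a => law P (rvpair Q X1) (q, a) / law P X1 a
  | inr b => law P (rvpair Q X2) (q, b) / law P X2 b
  end.

Lemma cond_node_edge q a b :
  0 < law P Y (a, b) -> cond_node q (inl a) = cond_node q (inr b).
Proof.
move=> ab.
have condY (T : finType) (X : Om -> T) t :
    law P (rvpair Q Y) (q, (a, b)) * law P X t
      = law P (rvpair Q X) (q, t) * law P Y (a, b) ->
    0 < law P X t -> law P (rvpair Q X) (q, t) / law P X t
      = law P (rvpair Q Y) (q, (a, b)) / law P Y (a, b).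
  by move=> M t0; apply/eqP; rewrite eqr_div ?lt0r_neq0 // M.
have a0 : 0 < law P X1 a := lt_le_trans ab (law_pair_le_fst P_ge0 X1 X2 a b).
have b0 : 0 < law P X2 b := lt_le_trans ab (law_pair_le_snd P_ge0 X1 X2 a b).
rewrite /= (condY _ _ _ (markov_funE (Y := Y) (k := fst) MQ1 q (a, b)) a0).
by rewrite (condY _ _ _ (markov_funE (Y := Y) (k := snd) MQ2 q (a, b)) b0).
Qed.

Lemma cond_node_root q u : cond_node q u = cond_node q (fingraph.root e u).
Proof.
apply: root_invariant => -[a|b] [a'|b'] //= ab.
  exact: cond_node_edge.
exact/esym/cond_node_edge.
Qed.

Lemma law_pair_cond_node q a :
  law P (rvpair Q X1) (q, a) = cond_node q (inl a) * law P X1 a.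
Proof.
have [a0|a0] := eqVneq (law P X1 a) 0; last by rewrite /= divfK.
rewrite a0 mulr0; apply/le_anti; rewrite law_ge0 // andbT -a0.
exact: law_pair_le_snd.
Qed.

Lemma law_pair_gk_common q c :
  law P (rvpair Q C) (q, c) = cond_node q c * law P C c.
Proof.
have -> : law P (rvpair Q C) (q, c)
    = \sum_(a | gk_rootl P X1 X2 a == c) law P (rvpair Q X1) (q, a).
  rewrite /law (partition_big X1 (fun a => gk_rootl P X1 X2 a == c)) => [|w];
    last by rewrite /= xpair_eqE => /andP[].
  apply: eq_bigr => a /eqP ac; apply: eq_bigl => w.
  rewrite /rvpair /gk_common -/(gk_rootl P X1 X2 (X1 w)) !xpair_eqE.
  by case: (X1 w =P a) => [->|]; rewrite ?andbF ?ac ?eqxx ?andbT.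
rewrite (law_compE P X1 (gk_rootl P X1 X2)) mulr_sumr.
by apply: eq_bigr => a /eqP <-; rewrite law_pair_cond_node cond_node_root.
Qed.

Lemma law_pair_gk_common_le w : 0 < P w ->
  law P (rvpair Q Y) (Q w, Y w) * law P C (C w) <= law P Q (Q w) * law P Y (Y w).
Proof.
move=> Pw; have a0 : 0 < law P X1 (X1 w) := law_gt0 P_ge0 X1 Pw.
have QY : law P (rvpair Q Y) (Q w, Y w) = cond_node (Q w) (C w) * law P Y (Y w).
  apply: (mulIf (lt0r_neq0 a0)).
  rewrite (markov_funE (Y := Y) (k := fst) MQ1 (Q w) (Y w)) law_pair_cond_node.
  by rewrite -cond_node_root mulrAC.
rewrite QY mulrAC -law_pair_gk_common ler_wpM2r ?law_ge0 //.
exact: law_pair_le_fst.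
Qed.

Lemma minfo_le_CGK : minfo P Q Y <= CGK P X1 X2.
Proof.
rewrite /minfo /CGK !entropyE //.
suff : \sum_w P w * ln (law P (rvpair Q Y) (Q w, Y w))
    + \sum_w P w * ln (law P C (C w))
  <= \sum_w P w * ln (law P Q (Q w)) + \sum_w P w * ln (law P Y (Y w)) by lra.
rewrite -!big_split /=; apply: ler_sum => w _; rewrite -!mulrDr.
have [Pw0|Pw] := eqVneq (P w) 0; first by rewrite Pw0 !mul0r.
have {}Pw : 0 < P w by rewrite lt0r Pw P_ge0.
rewrite ler_wpM2l // -!lnM ?posrE ?law_gt0 // ler_ln ?posrE ?mulr_gt0 ?law_gt0 //.
exact: law_pair_gk_common_le.
Qed.

End UpperBound.

Section GibbsBound.
Variables (R : realType) (Om : finType) (P : Om -> R).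
Hypotheses (P_ge0 : forall w, 0 <= P w) (P_sum1 : \sum_w P w = 1).
Variables (T1 T2 : finType) (X1 : Om -> T1) (X2 : Om -> T2).
Local Notation Y := (rvpair X1 X2).
Local Notation C := (gk_common P X1 X2).
Local Notation pC a := (law P C (gk_rootl P X1 X2 a)).

Lemma sum_law_gk_rootr k :
  \sum_(b | gk_rootr P X1 X2 b == k) law P X2 b = law P C k.
Proof.
rewrite -(law_compE P X2 (gk_rootr P X1 X2)); apply: eq_law_ae => // w Pw.
by rewrite /= (gk_common_ae P_ge0 X1 X2 Pw).
Qed.

(* Its [P]-average of logarithms is I(X1; X2) - H(C). *)
Definition gk_ratio (s : T1 * T2) : R :=
  law P X1 s.1 * law P X2 s.2 / (law P Y s * pC s.1).

Lemma sum_gk_ratio_le1 : \sum_w P w * gk_ratio (Y w) <= 1.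
Proof.
rewrite -(sum_law P Y gk_ratio).
rewrite (eq_bigr (fun s => law P Y (s.1, s.2) * gk_ratio (s.1, s.2))); last by case.
rewrite -(pair_bigA _ (fun a b => law P Y (a, b) * gk_ratio (a, b))) /=.
apply: (@le_trans _ _ (\sum_a \sum_(b | gk_rootr P X1 X2 b == gk_rootl P X1 X2 a)
           law P X1 a / pC a * law P X2 b)).
  apply: ler_sum => a _; rewrite [X in _ <= X]big_mkcond; apply: ler_sum => b _ /=.
  have [ab0|ab0] := eqVneq (law P Y (a, b)) 0.
    rewrite ab0 mul0r; case: ifP => // _.
    by apply: mulr_ge0; [apply: divr_ge0|]; apply: law_ge0.
  have ab : 0 < law P Y (a, b) by rewrite lt0r ab0 law_ge0.
  have pC0 : 0 < pC a.
    exact: lt_le_trans (lt_le_trans ab (law_pair_le_fst P_ge0 X1 X2 a b))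
      (le_law_comp P_ge0 X1 (gk_rootl P X1 X2) a).
  rewrite -(gk_root_edge ab) eqxx /gk_ratio /= le_eqVlt; apply/orP; left; apply/eqP.
  by field; rewrite (lt0r_neq0 pC0) (lt0r_neq0 ab).
apply: (@le_trans _ _ (\sum_a law P X1 a)); last first.
  rewrite (eq_bigr (fun a => law P X1 a * 1)) => [|a _]; last by rewrite mulr1.
  by rewrite (sum_law P X1 (fun _ => 1)) (eq_bigr P) ?P_sum1 // => w _; rewrite mulr1.
apply: ler_sum => a _; rewrite -mulr_sumr sum_law_gk_rootr.
by have [->|pC0] := eqVneq (pC a) 0; rewrite ?mulr0 ?law_ge0 ?divfK.
Qed.

Lemma CGK_le_minfo : CGK P X1 X2 <= minfo P X1 X2.
Proof.
rewrite /minfo /CGK !entropyE //.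
suff : \sum_w P w * (ln (law P X1 (X1 w)) + ln (law P X2 (X2 w))
             - ln (law P Y (Y w)) - ln (law P C (C w))) <= 0.
  rewrite (eq_bigr (fun w => P w * ln (law P X1 (X1 w)) + P w * ln (law P X2 (X2 w))
     - P w * ln (law P Y (Y w)) - P w * ln (law P C (C w)))) => [|w _]; last by ring.
  rewrite !sumrB big_split /=; lra.
apply: (@le_trans _ _ (\sum_w (P w * gk_ratio (Y w) - P w))); last first.
  by rewrite sumrB P_sum1 subr_le0 sum_gk_ratio_le1.
apply: ler_sum => w _.
have [Pw0|Pw] := eqVneq (P w) 0; first by rewrite Pw0 !mul0r subr0.
have {}Pw : 0 < P w by rewrite lt0r Pw P_ge0.
move: (law_gt0 P_ge0 X1 Pw) (law_gt0 P_ge0 X2 Pw) (law_gt0 P_ge0 Y Pw)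
  (law_gt0 P_ge0 C Pw) => p1 p2 pY pC0.
rewrite -[X in _ <= _ - X]mulr1 -mulrBr ler_wpM2l //.
have ratio0 : 0 < gk_ratio (Y w) by rewrite /gk_ratio divr_gt0 ?mulr_gt0.
apply: le_trans (ln_le_subr1 ratio0); rewrite /gk_ratio /=.
rewrite ln_div ?lnM ?posrE ?mulr_gt0 //; lra.
Qed.

End GibbsBound.

Lemma minfo_le_CGK_of_law (R : realType) (Om Om' : finType) (P : Om -> R)
    (P' : Om' -> R) (T1 T2 TQ : finType) (X1 : Om -> T1) (X2 : Om -> T2)
    (Q : Om' -> TQ) (X1' : Om' -> T1) (X2' : Om' -> T2) (Y' : Om' -> T1 * T2) :
  (forall w, 0 <= P' w) ->
  law P' (rvpair (rvpair X1' X2') Y') =1 law P (rvpair (rvpair X1 X2) (rvpair X1 X2)) ->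
  markov P' Q X1' Y' -> markov P' Q X2' Y' -> minfo P' Q Y' <= CGK P X1 X2.
Proof.
move=> P'_ge0 lawE M1 M2.
have Yae := ae_eq_of_law_diag P'_ge0 lawE.
have XX' : law P' (rvpair X1' X2') =1 law P (rvpair X1 X2) := eq_law_comp fst lawE.
have -> : minfo P' Q Y' = minfo P' Q (rvpair X1' X2').
  rewrite /minfo; congr (_ + _ - _); apply: eq_entropy; apply: eq_law_ae => // w Pw.
  by rewrite /rvpair Yae.
rewrite -(eq_CGK XX'); apply: (minfo_le_CGK P'_ge0).
  by apply: (markov_ae P'_ge0 _ M1) => w Pw; split => //; exact: Yae.
by apply: (markov_ae P'_ge0 _ M2) => w Pw; split => //; exact: Yae.
Qed.

Unset Implicit Arguments.
Set Strict Implicit.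

Theorem lemma8 (R : realType) (Om : finType) (P : Om -> R)
  (T1 T2 : finType) (X1 : Om -> T1) (X2 : Om -> T2) :
  is_pmf P ->
  Icap2 P X1 X2 (rvpair X1 X2) = CGK P X1 X2 /\ CGK P X1 X2 <= minfo P X1 X2.
Proof.
move=> [P_ge0 P_sum1]; split; last exact: CGK_le_minfo.
apply: sup_max.
  exists Om, P, _, (gk_common P X1 X2), X1, X2, (rvpair X1 X2).
  split => //; rewrite ?minfo_gk_common //.
  - exact: markov_gk_commonl.
  - exact: markov_gk_commonr.
move=> v [Om' [P' [TQ [Q [X1' [X2' [Y' [[P'_ge0 _] lawE M1 M2 ->]]]]]]]].
exact: minfo_le_CGK_of_law P'_ge0 lawE M1 M2.
Qed.
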